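(* For every integer $n\ge 3$, the corona $C_n\odot 3K_1$ admits a signed product cordial labeling.
   Context: A graph $G$ is signed product cordial if there is a vertex labeling $\alpha: V(G)\to\{1,-1\}$ such that, with the induced edge labeling $\alpha^*(uv)=\alpha(u)\alpha(v)$, we have $|v_\alpha(-1)-v_\alpha(1)|\le 1$ and $|e_{\alpha^*}(-1)-e_{\alpha^*}(1)|\le 1$. Here $v_\alpha(x)$ is the number of vertices labeled $x$ and $e_{\alpha^*}(x)$ is the number of edges labeled $x$; such an $\alpha$ is called a signed product cordial labeling. The corona $G_1\odot G_2$ of graphs $G_1$ (with $n_1$ vertices) and $G_2$ is obtained by taking one copy of $G_1$ and $n_1$ copies of $G_2$, and joining the $i$-th vertex of $G_1$ by an edge to every vertex of the $i$-th copy of $G_2$. Here $C_n$ is the cycle on $n$ vertices and $3K_1$ is the edgeless graph on $3$ vertices. So $C_n\odot 3K_1$ is the cycle $u_1\cdots u_n$ with three pendant vertices $v_x,w_x,t_x$ attached to each $u_x$. *)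

From mathcomp Require Import all_boot.
Set Implicit Arguments. Unset Strict Implicit. Unset Printing Implicit Defensive.

Record sgraph (V : finType) := SGraph {
  adj : rel V;
  adj_sym : symmetric adj;
  adj_irr : irreflexive adj }.

Definition edges (V : finType) (G : sgraph V) : {set {set V}} :=
  [set [set u; v] | u in V, v in V & adj G u v].

(* Vertex labelings with values in {1,-1}, encoded as bool: true = 1, false = -1.
   The induced edge label alpha(u)alpha(v) is 1 iff alpha u == alpha v. *)
Definition edge_label (V : finType) (alpha : V -> bool) (e : {set V}) : bool :=
  [forall u in e, forall v in e, alpha u == alpha v].

Definition nat_dist (a b : nat) : nat := (a - b) + (b - a).

Definition signed_product_cordial_labeling (V : finType) (G : sgraph V)
    (alpha : V -> bool) : Prop :=
  nat_dist #|[set x | alpha x]| #|[set x | ~~ alpha x]| <= 1 /\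
  nat_dist #|[set e in edges G | edge_label alpha e]|
           #|[set e in edges G | ~~ edge_label alpha e]| <= 1.

Definition signed_product_cordial (V : finType) (G : sgraph V) : Prop :=
  exists alpha : V -> bool, signed_product_cordial_labeling G alpha.

(* The corona C_n (.) 3K_1.  Vertex (x, 0) is the cycle vertex u_x; vertices
   (x, 1), (x, 2), (x, 3) are the pendants v_x, w_x, t_x attached to u_x. *)
Definition corona_adj (n : nat) : rel ('I_n * 'I_4) :=
  fun p q =>
    [|| (p.2 == 0 :> nat) && (q.2 == 0 :> nat) &&
          ((q.1 == (p.1).+1 %% n :> nat) || (p.1 == (q.1).+1 %% n :> nat)),
        (p.1 == q.1) && (p.2 == 0 :> nat) && (q.2 != 0 :> nat)
      | (p.1 == q.1) && (q.2 == 0 :> nat) && (p.2 != 0 :> nat)].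

Lemma corona_adj_sym (m : nat) : symmetric (@corona_adj m).
Proof.
move=> [x i] [y j]; rewrite /corona_adj /=.
rewrite (eq_sym y x).
by case: (x == y); case: (i == 0 :> nat); case: (j == 0 :> nat);
   case: (y == x.+1 %% m :> nat); case: (x == y.+1 %% m :> nat).
Qed.

Lemma corona_adj_irr (m : nat) : 3 <= m -> irreflexive (@corona_adj m).
Proof.
move=> m3 [x i]; rewrite /corona_adj /= eqxx /= andbN /= orbF.
have hx : x < m by [].
have -> : (x == x.+1 %% m :> nat) = false.
  case: (ltnP x.+1 m) => h; first by rewrite modn_small // ltn_eqF.
  have e : x.+1 = m by apply/eqP; rewrite eqn_leq h hx.
  rewrite e modnn; apply/negbTE; rewrite -lt0n.
  have m3' : 2 < x.+1 by rewrite e.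
  by move: m3'; rewrite ltnS; apply: leq_trans.
by rewrite andbF.
Qed.

Definition corona_C_3K1 (n : nat) (n3 : 3 <= n) : sgraph ('I_n * 'I_4)%type :=
  @SGraph _ (@corona_adj n) (@corona_adj_sym n) (@corona_adj_irr n n3).

From mathcomp Require Import all_boot.

Set Implicit Arguments.
Unset Strict Implicit.
Unset Printing Implicit Defensive.

(* Label every cycle vertex u_x and the pendant v_x by 1 and the pendants w_x,
   t_x by -1, so that 2n vertices carry each label.  Sending u_x to the cycle
   edge u_x u_(x+1) and each pendant to its own pendant edge is a bijection from
   vertices to edges (for n >= 3) under which the induced edge label is the
   label of the vertex; hence 2n edges carry each label as well. *)

Lemma edge_label2 (V : finType) (alpha : V -> bool) (u v : V) :
  edge_label alpha [set u; v] = (alpha u == alpha v).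
Proof.
apply/forall_inP/eqP => [Hu | Euv w].
  by have /forall_inP/(_ v (set22 u v))/eqP := Hu u (set21 u v).
by rewrite in_set2 => /orP[]/eqP->; apply/forall_inP => z;
   rewrite in_set2 => /orP[]/eqP->; rewrite ?Euv.
Qed.

Section EdgeBijection.

Variables (V : finType) (G : sgraph V) (alpha : V -> bool) (f : V -> {set V}).
Hypotheses (f_inj : injective f) (edgesE : edges G = f @: setT)
           (f_label : forall x, edge_label alpha (f x) = alpha x).

Lemma card_edges_label (P : pred bool) :
  #|[set e in edges G | P (edge_label alpha e)]| = #|[set x | P (alpha x)]|.
Proof.
rewrite -(card_imset _ f_inj); apply: eq_card => e.
rewrite !inE edgesE; apply/andP/imsetP => [[/imsetP[x _ ->]] | [x]].
  by rewrite f_label => Px; exists x; rewrite ?inE.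
by rewrite inE => Px ->; rewrite imset_f ?f_label.
Qed.

Lemma signed_product_cordial_edge_bijection :
  nat_dist #|[set x | alpha x]| #|[set x | ~~ alpha x]| <= 1 ->
  signed_product_cordial_labeling G alpha.
Proof.
by move=> balanced; split; rewrite // (card_edges_label id) (card_edges_label negb).
Qed.

End EdgeBijection.

Lemma set2_orbit_inj (T : finType) (s : T -> T) (a b : T) :
  s (s a) != a -> [set a; s a] = [set b; s b] -> a = b.
Proof.
move=> no_2cycle E.
have /set2P[// | b_sa] : b \in [set a; s a] by rewrite E set21.
have /set2P[// | a_sb] : a \in [set b; s b] by rewrite -E set21.
by rewrite -b_sa -a_sb eqxx in no_2cycle.
Qed.

Section Corona.

Variables (n : nat) (n3 : 3 <= n).

Implicit Types (x : 'I_n) (p u v : 'I_n * 'I_4).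

Lemma ordS_ordS_neq x : ordS (ordS x) != x.
Proof.
apply/eqP => /(congr1 val) /=.
rewrite -[(_ %% n).+1]addn1 modnDml addSnnS -[in RHS](modn_small (ltn_ord x)).
by rewrite -[in RHS](addn0 x) => /eqP; rewrite eqn_modDl mod0n modn_small.
Qed.

Definition corona_edge p : {set 'I_n * 'I_4} :=
  if p.2 == ord0 then [set (p.1, ord0); (ordS p.1, ord0)] else [set (p.1, ord0); p].

Lemma corona_edge_inj : injective corona_edge.
Proof.
move=> [x i] [y j]; rewrite /corona_edge /=.
case: eqP => [-> | /eqP i0]; case: eqP => [-> | /eqP j0] E.
- suff [] : (x, ord0) = (y, ord0 : 'I_4) by move->.
  apply: (@set2_orbit_inj _ (fun p => (ordS p.1, ord0)) _ _ _ E).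
  by rewrite xpair_eqE (negbTE (ordS_ordS_neq x)).
- have : (y, j) \in [set (x, ord0); (ordS x, ord0)] by rewrite E set22.
  by rewrite !in_set2 !xpair_eqE (negbTE j0) !andbF.
- have : (x, i) \in [set (y, ord0); (ordS y, ord0)] by rewrite -E set22.
  by rewrite !in_set2 !xpair_eqE (negbTE i0) !andbF.
- have : (x, i) \in [set (y, ord0); (y, j)] by rewrite -E set22.
  by rewrite !in_set2 xpair_eqE (negbTE i0) andbF => /eqP.
Qed.

Lemma corona_adj_edge u v : corona_adj u v -> [set u; v] \in corona_edge @: setT.
Proof.
have ord0E (k : 'I_4) : (k == 0 :> nat) = (k == ord0) by [].
have ordSE (x y : 'I_n) : (y == x.+1 %% n :> nat) = (y == ordS x) by [].
case: u v => x i [y j]; rewrite /corona_adj /= !ord0E !ordSE.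
case/or3P => [/andP[/andP[/eqP-> /eqP->] /orP[]/eqP->]
             | /andP[/andP[/eqP-> /eqP->] /negbTE j0]
             | /andP[/andP[/eqP-> /eqP->] /negbTE i0]]; apply/imsetP.
- by exists (x, ord0); rewrite // /corona_edge /=.
- by exists (y, ord0); rewrite // /corona_edge /= setUC.
- by exists (y, j); rewrite // /corona_edge /= j0.
- by exists (y, i); rewrite // /corona_edge /= i0 setUC.
Qed.

Lemma corona_edge_adj p : corona_edge p \in edges (corona_C_3K1 n3).
Proof.
rewrite /corona_edge; case: ifP => [/eqP p2 | /negbT p2]; apply/imset2P.
  by exists (p.1, ord0) (ordS p.1, ord0); rewrite // inE /= /corona_adj /= !eqxx.
by exists (p.1, ord0) p; rewrite // inE /= /corona_adj /= eqxx p2 orbT.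
Qed.

Lemma corona_edges : edges (corona_C_3K1 n3) = corona_edge @: setT.
Proof.
apply/setP => e; apply/idP/idP => [/imset2P[u v _] | /imsetP[p _ ->]].
  by rewrite inE => /corona_adj_edge uv ->.
exact: corona_edge_adj.
Qed.

Definition corona_label p : bool := p.2 <= 1.

Lemma corona_edge_label p : edge_label corona_label (corona_edge p) = corona_label p.
Proof.
rewrite /corona_edge; case: ifP => [/eqP p2 | _]; rewrite edge_label2 /corona_label /=.
  by rewrite p2.
by case: (p.2 <= 1).
Qed.

Lemma card_corona_label :
  #|[set p | corona_label p]| = #|[set p | ~~ corona_label p]|.
Proof.
(* [rev_ord] exchanges the pendant indices {0, 1} and {2, 3}. *)
pose swap p := (p.1, rev_ord p.2).
have swap_inv : involutive swap by move=> [x j]; rewrite /swap /= rev_ordK.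
rewrite -(card_preimset _ (inv_inj swap_inv)).
apply: eq_card => -[x j]; rewrite !inE /corona_label /=.
by case: j => -[|[|[|[|]]]].
Qed.

End Corona.

Theorem theorem2p4 (n : nat) (n3 : 3 <= n) :
  signed_product_cordial (corona_C_3K1 n3).
Proof.
exists (@corona_label n).
apply: signed_product_cordial_edge_bijection (corona_edge_inj n3) (corona_edges n3) _ _.
  exact: corona_edge_label.
by rewrite card_corona_label /nat_dist subnn.
Qed.
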